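(* Let $q$ be a prime power, $s\geq 2$, $V=\mathbb{F}_{q^s}^3$, and let $W$ be an $(s+1)$-dimensional $\mathbb{F}_q$-subspace of $V$ such that $\mathcal{L}_W$ is a nontrivial blocking set of $\mathrm{PG}(2,q^s)$ (i.e. $\mathcal{L}_W$ is not a line) and $\mathcal{L}_W$ has a point of weight $s-1$. Then $\mathcal{L}_W$ is projectively equivalent to $\mathcal{L}_U$, where $U=\{(x,\mathrm{Tr}_{q^s/q}(x),y): x\in\mathbb{F}_{q^s},\ y\in\mathbb{F}_q\}$.
   Context: Points of $\mathrm{PG}(2,q^s)$ are the 1-dimensional $\mathbb{F}_{q^s}$-subspaces $\langle \vec v\rangle_{\mathbb{F}_{q^s}}$ of $V=\mathbb{F}_{q^s}^3$, and lines are the 2-dimensional $\mathbb{F}_{q^s}$-subspaces. For an $\mathbb{F}_q$-subspace $U$ of $V$, $\mathcal{L}_U=\{\langle \vec v\rangle_{\mathbb{F}_{q^s}} : \vec v\in U\setminus\{0\}\}$. The weight of a point $P=\langle\vec v\rangle_{\mathbb{F}_{q^s}}$ with respect to $\mathcal{L}_U$ is $\dim_{\mathbb{F}_q}(U\cap \langle\vec v\rangle_{\mathbb{F}_{q^s}})$. $\mathrm{Tr}_{q^s/q}(x)=x+x^q+\dots+x^{q^{s-1}}$. A blocking set is a point set meeting every line. *)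

From HB Require Import structures.
From mathcomp Require Import all_boot all_order all_algebra all_field.
Set Implicit Arguments. Unset Strict Implicit. Unset Printing Implicit Defensive.
Import GRing.Theory.
Local Open Scope ring_scope.

(* Setting: K is a finite field of order q^s; vectors of V = K^3 are row
   vectors 'rV[K]_3; a projective point <v> is represented by a nonzero v. *)

Section Defs.
Variable K : finFieldType.

Definition prime_power (q : nat) : Prop :=
  exists p k : nat, prime p /\ (0 < k)%N /\ q = (p ^ k)%N.

Definition Fq (q : nat) : {set K} := [set x : K | x ^+ q == x].

Definition Fq_subspace (q : nat) (W : {set 'rV[K]_3}) : Prop :=
  [/\ 0 \in W,
      forall u v, u \in W -> v \in W -> u + v \in W &
      forall a u, a \in Fq q -> u \in W -> a *: u \in W].

Definition Fq_dim (q : nat) (W : {set 'rV[K]_3}) : nat := trunc_log q #|W|.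

Definition Kspan (v : 'rV[K]_3) : {set 'rV[K]_3} := [set w | (w <= v)%MS].

Definition inL (U : {set 'rV[K]_3}) (v : 'rV[K]_3) : Prop :=
  exists2 u, u \in U & u != 0 /\ (u == v)%MS.

Definition weight (q : nat) (U : {set 'rV[K]_3}) (v : 'rV[K]_3) : nat :=
  Fq_dim q (U :&: Kspan v).

(* lines of PG(2,K): 2-dimensional K-subspaces, given as row spaces of
   rank-2 matrices M; the point <v> lies on M iff (v <= M)%MS *)
Definition is_line (M : 'M[K]_(2,3)) : Prop := \rank M = 2%N.

Definition blocking_set (P : 'rV[K]_3 -> Prop) : Prop :=
  forall M : 'M[K]_(2,3), is_line M ->
    exists v : 'rV[K]_3, [/\ v != 0, P v & (v <= M)%MS].

Definition is_line_set (P : 'rV[K]_3 -> Prop) : Prop :=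
  exists2 M : 'M[K]_(2,3), is_line M &
    forall v : 'rV[K]_3, v != 0 -> (P v <-> (v <= M)%MS).

Definition Tr (q s : nat) (x : K) : K := \sum_(i < s) x ^+ (q ^ i).

Definition row3 (a b c : K) : 'rV[K]_3 := \row_(j < 3) [:: a; b; c]`_j.

Definition U_Tr (q s : nat) : {set 'rV[K]_3} :=
  [set v | [exists x : K, exists y : K, (y \in Fq q) && (v == row3 x (Tr q s x) y)]].

Definition proj_equiv (P Q : 'rV[K]_3 -> Prop) : Prop :=
  exists2 A : 'M[K]_3, A \in unitmx &
    forall v : 'rV[K]_3, v != 0 -> (P v <-> Q (v *m A)).

End Defs.

(* Let <v> be the point of weight s-1 and Z = {z | z v in W}, an F_q-subspace of
   F_{q^s} of dimension s-1.  Completing a basis of W /\ <v> by two vectors a, b gives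
   W = F_q a + F_q b + Z v.  If a, b, v were dependent over F_{q^s}, L_W would lie in a
   line and, being a blocking set, would be that line; so (a, b, v) is a frame in which
   W = F_q x F_q x Z.  By pigeonhole on lam |-> Tr(lam .) restricted to a basis of Z,
   some lam != 0 has lam Z = ker Tr, and with Tr t = 1 the collineation
   (x, y, z) |-> (y t + lam z, y, x) maps F_q x F_q x Z onto U. *)

From mathcomp Require Import all_boot all_order all_algebra all_field.
From mathcomp Require Import zify ring.
Set Implicit Arguments. Unset Strict Implicit. Unset Printing Implicit Defensive.
Import GRing.Theory.
Local Open Scope ring_scope.

Section Plane.
Variable K : finFieldType.
Local Notation V := 'rV[K]_3.

Lemma eqmx_rV n (u v : 'rV[K]_n) : u != 0 -> (u <= v)%MS -> (u == v)%MS.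
Proof.
move=> u_neq0 uv; rewrite -(mxrank_leqif_eq uv) eqn_leq mxrank_leqif_eq //=.
by rewrite !rank_rV u_neq0 leq_b1.
Qed.

Lemma inL_eqmx (X : {set V}) u v : (u == v)%MS -> inL X u -> inL X v.
Proof.
move=> /eqmxP uv [w wX [w_neq0 /eqmxP wu]]; exists w => //; split => //.
exact/eqmxP/(eqmx_trans wu uv).
Qed.

Lemma inL_mulmx (X : {set V}) (A : 'M[K]_3) v : A \in unitmx ->
  inL [set u *m A | u in X] (v *m A) <-> inL X v.
Proof.
move=> A_unit; split.
  case=> _ /imsetP[w wX ->] [wA_neq0 /eqmxP/(eqmxMr (invmx A))].
  rewrite !mulmxK // => /eqmxP wv; exists w => //; split => //.
  by apply: contraNneq wA_neq0 => ->; rewrite mul0mx.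
case=> w wX [w_neq0 /eqmxP/(eqmxMr A)/eqmxP wv]; exists (w *m A); first exact: imset_f.
by split=> //; apply: contra_neq w_neq0 => /(congr1 (mulmx^~ (invmx A))); rewrite mulmxK ?mul0mx.
Qed.

Lemma proj_equiv_imset (X : {set V}) (A B : 'M[K]_3) : A \in unitmx -> B \in unitmx ->
  proj_equiv (inL [set u *m A | u in X]) (inL [set u *m B | u in X]).
Proof.
move=> A_unit B_unit; exists (invmx A *m B); first by rewrite unitmx_mul unitmx_inv A_unit.
move=> v _; rewrite -{1}(mulmxKV A_unit v) mulmxA.
by rewrite inL_mulmx // inL_mulmx.
Qed.

Lemma nonunitmx_ker n (A : 'M[K]_n) : A \notin unitmx -> exists2 c : 'cV_n, c != 0 & A *m c = 0.
Proof.
rewrite unitmxE unitfE negbK -det_tr => /det0P[v v_neq0 vA].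
by exists v^T; rewrite ?trmx_eq0 // -[A]trmxK -trmx_mul vA trmx0.
Qed.

Section KernelLine.
Variables (c : 'cV[K]_3) (x z : V).
Hypotheses (xc : x *m c = 0) (zc : z *m c != 0).

Lemma is_line_col_mx : x != 0 -> is_line (col_mx x z).
Proof.
move=> x_neq0; apply/eqP; rewrite eqn_leq rank_leq_row /=.
have z_x : ~~ (z <= x)%MS by apply: contraNN zc => /submxP[d ->]; rewrite -mulmxA xc mulmx0.
have : (x < col_mx x z)%MS.
  rewrite ltmxE -!addsmxE addsmxSl /=; apply: contraNN z_x.
  exact: submx_trans (addsmxSr x z).
by move/rank_ltmx; rewrite rank_rV x_neq0.
Qed.

Lemma sub_col_mx_ker (y : V) : (y <= col_mx x z)%MS -> y *m c = 0 -> (y <= x)%MS.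
Proof.
rewrite -addsmxE => /sub_addsmxP[[d e] /= ->].
rewrite mulmxDl -!mulmxA xc mulmx0 add0r (mx11_scalar e) !mul_scalar_mx.
move=> /eqP; rewrite scaler_eq0 (negbTE zc) orbF => /eqP->.
by rewrite scale0r addr0 submxMl.
Qed.
End KernelLine.

Lemma blocking_set_ker_line (W : {set V}) (c : 'cV[K]_3) : c != 0 ->
  (forall w, w \in W -> w *m c = 0) -> blocking_set (inL W) -> is_line_set (inL W).
Proof.
move=> c_neq0 Wc W_block.
have inL_ker y : inL W y -> y *m c = 0.
  by case=> w /Wc wc [_ /andP[_ /submxP[d ->]]]; rewrite -mulmxA wc mulmx0.
have /existsP[z zc] : [exists z : V, z *m c != 0].
  apply: contraNT c_neq0; rewrite negb_exists => /forallP c0.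
  by apply/eqP/row_matrixP => i; rewrite row0 rowE; apply/eqP/negPn/c0.
have rank_c : \rank c = 1%N by apply/eqP; rewrite eqn_leq rank_leq_col lt0n mxrank_eq0.
have rank_ker : \rank (kermx c) = 2%N by rewrite mxrank_ker rank_c.
pose M := castmx (rank_ker, erefl) (row_base (kermx c)).
have eqM : (M :=: kermx c)%MS := eqmx_trans (eqmx_cast _ _) (eq_row_base _).
exists M; first by rewrite /is_line eqM.
(* A point <x> of ker c is the only point of ker c on the line through <x> and <z>. *)
move=> x x_neq0; rewrite eqM sub_kermx; split=> [/inL_ker->//|/eqP xc].
have [y [y_neq0 Wy y_xz]] := W_block _ (is_line_col_mx xc zc x_neq0).
exact: inL_eqmx (eqmx_rV y_neq0 (sub_col_mx_ker xc zc y_xz (inL_ker _ Wy))) Wy.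
Qed.

Definition col_mx3 (r0 r1 r2 : V) : 'M[K]_3 := \matrix_(i, j) [:: r0; r1; r2]`_i 0 j.

Lemma mul_row3_col_mx3 x y z r0 r1 r2 :
  row3 x y z *m col_mx3 r0 r1 r2 = x *: r0 + y *: r1 + z *: r2.
Proof. by apply/rowP => j; rewrite !mxE !big_ord_recl big_ord0 !mxE /= addr0 addrA. Qed.

Lemma setI_Kspan (W : {set V}) v : W :&: Kspan v = [set z *: v | z in [set z | z *: v \in W]].
Proof.
apply/setP => w; rewrite !inE; apply/andP/imsetP => [[wW /sub_rVP[z wE]]|[z]].
  by exists z; rewrite // inE -wE.
by rewrite inE => zW ->; rewrite scalemx_sub.
Qed.

Lemma card_setI_Kspan (W : {set V}) v : v != 0 -> #|W :&: Kspan v| = #|[set z | z *: v \in W]|.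
Proof.
move=> v_neq0; rewrite setI_Kspan card_imset // => y z /eqP.
by rewrite -subr_eq0 -scalerBl scaler_eq0 (negbTE v_neq0) orbF subr_eq0 => /eqP.
Qed.
End Plane.

Section LinearSets.
Variables (K : finFieldType) (q s : nat).
Hypotheses (hq : prime_power q) (hK : #|K| = (q ^ s)%N) (s_gt0 : (0 < s)%N).

Local Notation F := (Fq K q).
Local Notation Tr := (@Tr K q s).

Lemma q_gt1 : (1 < q)%N.
Proof.
have [p [k [p_pr [k_gt0 qE]]]] := hq.
rewrite qE (leq_trans (prime_gt1 p_pr)) // -{1}(expn1 p).
by rewrite leq_exp2l ?prime_gt1.
Qed.

Lemma pchar_nat_expq i : [pchar K].-nat (q ^ i)%N.
Proof.
have [p [k [p_pr [_ qE]]]] := hq.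
have pK : p \in [pchar K] by apply: (@card_finPcharP _ p (k * s)); rewrite // hK qE expnM.
by rewrite qE -expnM pnatX (pnatE _ p_pr) pK.
Qed.

Lemma exprDq i (x y : K) : (x + y) ^+ (q ^ i) = x ^+ (q ^ i) + y ^+ (q ^ i).
Proof. exact/exprDn_pchar/pchar_nat_expq. Qed.

Lemma exprNq i (x : K) : (- x) ^+ (q ^ i) = - x ^+ (q ^ i).
Proof. exact/exprNn_pchar/pchar_nat_expq. Qed.

Lemma Fq_expq i a : a \in F -> a ^+ (q ^ i) = a.
Proof.
rewrite inE => /eqP aq; elim: i => [|i IHi]; first by rewrite expr1.
by rewrite expnSr exprM IHi.
Qed.

Lemma Fq0 : 0 \in F.
Proof. by rewrite inE expr0n gtn_eqF ?(ltnW q_gt1). Qed.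

Lemma Fq1 : 1 \in F.
Proof. by rewrite inE expr1n. Qed.

Lemma FqD a b : a \in F -> b \in F -> a + b \in F.
Proof. by rewrite !inE -[q]expn1 exprDq => /eqP-> /eqP->. Qed.

Lemma FqN a : a \in F -> - a \in F.
Proof. by rewrite !inE -[q]expn1 exprNq => /eqP->. Qed.

Lemma FqM a b : a \in F -> b \in F -> a * b \in F.
Proof. by rewrite !inE exprMn => /eqP-> /eqP->. Qed.

Lemma FqV a : a \in F -> a^-1 \in F.
Proof. by rewrite !inE exprVn => /eqP->. Qed.

Lemma TrD x y : Tr (x + y) = Tr x + Tr y.
Proof. by rewrite /Tr -big_split; apply: eq_bigr => i _; rewrite exprDq. Qed.

Lemma TrN x : Tr (- x) = - Tr x.
Proof. by rewrite /Tr -sumrN; apply: eq_bigr => i _; rewrite exprNq. Qed.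

Lemma TrB x y : Tr (x - y) = Tr x - Tr y.
Proof. by rewrite TrD TrN. Qed.

Lemma TrZ a x : a \in F -> Tr (a * x) = a * Tr x.
Proof. by move=> Fa; rewrite /Tr mulr_sumr; apply: eq_bigr => i _; rewrite exprMn Fq_expq. Qed.

(* Raising to the q-th power shifts the summands cyclically, as x^(q^s) = x. *)
Lemma Tr_Fq x : Tr x \in F.
Proof.
have expqD : {morph (fun y : K => y ^+ q) : y z / y + z} by move=> y z; rewrite -[q]expn1 exprDq.
have := @big_ord_recr K 0 +%R s (fun i : 'I_s.+1 => x ^+ (q ^ i)).
rewrite big_ord_recl /= -hK expf_card expn0 expr1 [x + _]addrC => /addIr shiftE.
rewrite inE /Tr (big_morph _ expqD (Fq_expq 1 Fq0)) -shiftE.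
by under eq_bigr do rewrite -exprM -expnSr.
Qed.

Lemma card_Tr_fiber c : (#|[set x | Tr x == c]| <= q ^ s.-1)%N.
Proof.
pose P : {poly K} := \sum_(i < s) 'X^(q ^ i) - c%:P.
have s1_lt : (s.-1 < s)%N by rewrite prednK.
have Plead : P`_(q ^ s.-1) = 1.
  rewrite coefB coefC gtn_eqF ?expn_gt0 ?(ltnW q_gt1) // subr0 coef_sum.
  rewrite (bigD1 (Ordinal s1_lt)) //= coefXn eqxx big1 ?addr0 // => i ne.
  by rewrite coefXn eqn_exp2l ?q_gt1 // eq_sym -[s.-1]/(val (Ordinal s1_lt)) val_eqE (negbTE ne).
have Psize : (size P <= (q ^ s.-1).+1)%N.
  rewrite (leq_trans (size_polyD _ _)) // geq_max size_polyN.
  rewrite (leq_trans (size_polyC_leq1 _)) // andbT.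
  apply: leq_trans (size_sum _ _ _) _; apply/bigmax_leqP => i _.
  by rewrite size_polyXn ltnS leq_exp2l ?q_gt1 // -ltnS prednK.
have P_neq0 : P != 0 by apply: contra_eqN Plead => /eqP->; rewrite coef0 eq_sym oner_eq0.
rewrite -ltnS (leq_trans _ Psize) // cardE max_poly_roots ?enum_uniq //.
apply/allP => x; rewrite mem_enum inE /root /P => /eqP <-.
by rewrite !hornerE horner_sum; under eq_bigr do rewrite hornerXn; rewrite subrr.
Qed.

(* Tr maps K (of size q^s) into F with fibres of size at most q^(s-1). *)
Lemma card_Fq : #|F| = q.
Proof.
have card_Fq_le : (#|F| <= q)%N.
  have Xq_size : size ('X^q - 'X : {poly K}) = q.+1.
    by rewrite size_polyDl ?size_polyXn ?size_polyN ?size_polyX ?ltnS ?q_gt1.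
  have Xq_neq0 : ('X^q - 'X : {poly K}) != 0 by rewrite -size_poly_eq0 Xq_size.
  rewrite -ltnS -Xq_size cardE max_poly_roots ?enum_uniq //.
  by apply/allP => x; rewrite mem_enum inE /root !hornerE subr_eq0.
have qs_gt0 : (0 < q ^ s.-1)%N by rewrite expn_gt0 ltnW ?q_gt1.
apply/eqP; rewrite eqn_leq card_Fq_le -(leq_pmul2r qs_gt0) /=.
rewrite -expnS prednK // -hK -sum1_card (partition_big_imset Tr) /=.
have Tr_im : [set Tr x | x : K] \subset F.
  by apply/subsetP => _ /imsetP[x _ ->]; apply: Tr_Fq.
apply: leq_trans (leq_mul (subset_leq_card Tr_im) (leqnn _)).
rewrite -sum_nat_const; apply: leq_sum => c _.
apply: leq_trans (card_Tr_fiber c); rewrite sum1dep_card.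
by apply/eq_leq/eq_card => x; rewrite inE.
Qed.

Lemma exists_Tr_eq1 : exists t, Tr t = 1.
Proof.
have [x Trx_neq0] : exists x, Tr x != 0.
  apply/existsP; apply: contraTT (card_Tr_fiber 0); rewrite negb_exists => /forallP Tr0.
  rewrite -ltnNge (_ : [set x | _] = [set: K]) ?cardsT ?hK ?ltn_exp2l ?prednK ?q_gt1 //.
  by apply/setP => x; rewrite !inE; apply/negPn.
by exists ((Tr x)^-1 * x); rewrite TrZ ?FqV ?Tr_Fq ?mulVf.
Qed.

(* Pigeonhole: lam |-> (Tr (lam * x))_(x in l) maps q^s elements into F^(size l). *)
Lemma Tr_annihilator (l : seq K) : (size l < s)%N ->
  exists2 lam, lam != 0 & {in l, forall x, Tr (lam * x) = 0}.
Proof.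
move=> l_small; pose f lam := [ffun i : 'I_(size l) => Tr (lam * l`_i)].
have /injectivePn[lam1 [lam2 neq12 f12]] : ~~ injectiveb f.
  apply/negP => /injectiveP f_inj.
  have f_im : f @: K \subset ffun_on F.
    by apply/subsetP => _ /imsetP[lam _ ->]; apply/ffun_onP => i; rewrite ffunE Tr_Fq.
  move: (subset_leq_card f_im); rewrite card_imset // card_ffun_on card_Fq card_ord hK.
  by rewrite leqNgt ltn_exp2l ?q_gt1 // l_small.
exists (lam1 - lam2); first by rewrite subr_eq0.
move=> x /(nthP 0)[i i_lt <-]; have /ffunP/(_ (Ordinal i_lt)) := f12.
by rewrite !ffunE /= mulrBl TrB => ->; rewrite subrr.
Qed.

Section Span.
Variable V : finLmodType K.

(* [Fq_subspace] generalised to any finite K-module, so that it applies to K as well as K^3. *)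
Definition qsubspace (X : {set V}) : Prop :=
  [/\ 0 \in X, forall u v, u \in X -> v \in X -> u + v \in X &
      forall a u, a \in F -> u \in X -> a *: u \in X].

Definition qspan (l : seq V) : {set V} :=
  foldr (fun x S => [set p.1 *: x + p.2 | p in setX F S]) [set 0] l.

Lemma qspan_consP x l u :
  reflect (exists a y, [/\ a \in F, y \in qspan l & u = a *: x + y]) (u \in qspan (x :: l)).
Proof.
apply: (iffP imsetP) => [[[a y] /setXP[Fa ly] ->]|[a [y [Fa ly ->]]]]; first by exists a, y.
by exists (a, y) => //; apply/setXP.
Qed.

Lemma qspan_subspace l : qsubspace (qspan l).
Proof.
elim: l => [|x l [span0 spanD spanZ]].
  split=> [|u v|a u]; rewrite !inE //; first by move=> /eqP-> /eqP->; rewrite addr0.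
  by move=> _ /eqP->; rewrite scaler0.
split=> [|u v|b u].
- by apply/qspan_consP; exists 0, 0; rewrite Fq0 span0 scale0r addr0.
- case/qspan_consP=> [a [y [Fa ly ->]]] /qspan_consP[b [z [Fb lz ->]]].
  apply/qspan_consP; exists (a + b), (y + z).
  by rewrite FqD ?spanD // scalerDl addrACA.
- move=> Fb /qspan_consP[a [y [Fa ly ->]]].
  apply/qspan_consP; exists (b * a), (b *: y).
  by rewrite FqM ?spanZ // scalerDr scalerA.
Qed.

Lemma qspan_sub X l : qsubspace X -> {subset l <= X} -> qspan l \subset X.
Proof.
case=> X0 XD XZ; elim: l => [|x l IHl] lX; first by rewrite sub1set.
have /IHl/subsetP span_lX : {subset l <= X} by move=> z lz; rewrite lX // in_cons lz orbT.
apply/subsetP => _ /qspan_consP[a [y [Fa ly ->]]].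
by apply: XD; [apply: XZ => //; apply: lX; exact: mem_head | exact: span_lX].
Qed.

Lemma card_qspan_cons x l : x \notin qspan l -> #|qspan (x :: l)| = (q * #|qspan l|)%N.
Proof.
have [span0 spanD spanZ] := qspan_subspace l.
move=> x_notin; rewrite /= card_in_imset ?cardsX ?card_Fq //.
move=> [a y] [b z] /setXP[Fa ly] /setXP[Fb lz] /= eq_ab.
have [ab|neq_ab] := eqVneq a b; first by move: eq_ab; rewrite -ab => /(addrI (a *: x))->.
case/negP: x_notin.
have -> : x = (a - b)^-1 *: (z - y).
  apply: (@scalerI _ _ (a - b)); first by rewrite subr_eq0.
  rewrite scalerA mulfV ?subr_eq0 // scale1r scalerBl.
  by apply/eqP; rewrite subr_eq addrAC [z + _]addrC -eq_ab addrK.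
by rewrite spanZ ?FqV ?FqD ?FqN ?spanD ?spanZ // -scaleN1r spanZ ?FqN ?Fq1.
Qed.

Lemma mem_qspan x l : x \in l -> x \in qspan l.
Proof.
elim: l => // y l IHl /predU1P[->|/IHl xl]; apply/qspan_consP.
  by exists 1, 0; rewrite Fq1 scale1r addr0; case: (qspan_subspace l).
by exists 0, x; rewrite Fq0 scale0r add0r.
Qed.

Lemma qsubspace_extend X l0 : qsubspace X -> {subset l0 <= X} ->
  exists l, [/\ {subset l <= X}, qspan (l ++ l0) = X & #|X| = (q ^ size l * #|qspan l0|)%N].
Proof.
move=> Xsub; move: {2}_.+1 (ltnSn (#|X| - #|qspan l0|)) => n.
elim: n l0 => // n IHn l0 lt_n l0X; have span_l0X := qspan_sub Xsub l0X.
have [X_span|/subsetPn[x xX x_notin]] := boolP (X \subset qspan l0).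
  exists [::]; rewrite expn0 mul1n; split => //.
    by apply/eqP; rewrite eqEsubset X_span span_l0X.
  by apply/eqP; rewrite eqn_leq !subset_leq_card.
have xl0X : {subset x :: l0 <= X} by move=> y /predU1P[->|/l0X].
have card_xl0 := card_qspan_cons x_notin.
have span_gt0 : (0 < #|qspan l0|)%N by apply/card_gt0P; exists 0; case: (qspan_subspace l0).
have [|l [lX span_l card_l]] := IHn (x :: l0) _ xl0X.
  have := subset_leq_card (qspan_sub Xsub xl0X); have := q_gt1; nia.
exists (rcons l x); split.
- by move=> y; rewrite mem_rcons => /predU1P[->|/lX].
- by rewrite cat_rcons.
- by rewrite card_l card_xl0 size_rcons expnSr mulnA.
Qed.

Lemma qsubspace_basis X : qsubspace X -> exists2 l, qspan l = X & #|X| = (q ^ size l)%N.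
Proof.
move=> Xsub; have [|l [_ span_l card_l]] := qsubspace_extend (l0 := [::]) Xsub; first by [].
by exists l; [rewrite -(cats0 l) | rewrite card_l cards1 muln1].
Qed.

Lemma card_qsubspace X : qsubspace X -> #|X| = (q ^ trunc_log q #|X|)%N.
Proof. by case/qsubspace_basis=> l _ ->; rewrite trunc_expnK ?q_gt1. Qed.
End Span.

Lemma qsubspace_scale_kerTr (Z : {set K}) : qsubspace (V := K^o) Z -> #|Z| = (q ^ s.-1)%N ->
  exists2 lam, lam != 0 & [set lam * z | z in Z] = [set x | Tr x == 0].
Proof.
move=> Zsub cardZ; have [l span_l card_l] := qsubspace_basis Zsub.
have [|lam lam_neq0 lam_l] := @Tr_annihilator l.
  by rewrite (expnI q_gt1 (etrans (esym card_l) cardZ)) prednK.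
exists lam => //.
have ann_sub : qsubspace (V := K^o) [set z | Tr (lam * z) == 0].
  split=> [|u v|a u Fa]; rewrite !inE ?mulr0 ?mulrDr ?TrD.
  - by rewrite -(mulr0 0) TrZ ?Fq0 ?mul0r.
  - by move=> /eqP-> /eqP->; rewrite addr0.
  - by rewrite -[a *: u]/(a * u) mulrCA (TrZ _ Fa) => /eqP->; rewrite mulr0.
have Z_ann : Z \subset [set z | Tr (lam * z) == 0].
  by rewrite -span_l; apply: (qspan_sub ann_sub) => x /lam_l; rewrite inE => ->.
apply/eqP; rewrite eqEcard; apply/andP; split.
  by apply/subsetP => _ /imsetP[z /(subsetP Z_ann) + ->]; rewrite !inE.
by rewrite card_imset ?cardZ ?card_Tr_fiber //; apply: mulfI.
Qed.

Local Notation V := 'rV[K]_3.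

Definition Fq2X (Z : {set K}) : {set V} :=
  [set u | [exists a in F, exists b in F, exists z in Z, u == row3 a b z]].

Lemma Fq2XP (Z : {set K}) u :
  reflect (exists a b z, [/\ a \in F, b \in F, z \in Z & u = row3 a b z]) (u \in Fq2X Z).
Proof.
rewrite inE; apply: (iffP existsP) => [[a /andP[Fa /existsP[b /andP[Fb /existsP[z]]]]]|].
  by case/andP=> zZ /eqP->; exists a, b, z.
case=> a [b [z [Fa Fb zZ ->]]]; exists a; rewrite Fa; apply/existsP; exists b.
by rewrite Fb; apply/existsP; exists z; rewrite zZ /=.
Qed.

Lemma qsubspace_setI_Kspan (W : {set V}) v : qsubspace W -> qsubspace (W :&: Kspan v).
Proof.
case=> W0 WD WZ; split=> [|u w|a u Fa]; rewrite !inE ?W0 ?sub0mx //.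
  by case/andP=> uW uv /andP[wW wv]; rewrite WD ?addmx_sub.
by case/andP=> uW uv; rewrite WZ ?scalemx_sub.
Qed.

Lemma qsubspace_line_coefs (W : {set V}) v :
  qsubspace W -> qsubspace (V := K^o) [set z | z *: v \in W].
Proof.
case=> W0 WD WZ; split=> [|u w|a u Fa]; rewrite !inE ?scale0r //.
  by rewrite scalerDl; apply: WD.
by rewrite -[a *: u]/(a * u) -scalerA; apply: WZ.
Qed.

Lemma qsubspace_decomp (W : {set V}) v : qsubspace W -> #|W| = (q ^ 2 * #|W :&: Kspan v|)%N ->
  exists a b, W = [set u *m col_mx3 a b v | u in Fq2X [set z | z *: v \in W]].
Proof.
move=> Wsub cardW; have S_sub := qsubspace_setI_Kspan v Wsub.
have [l0 span_l0 _] := qsubspace_basis S_sub.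
have l0W : {subset l0 <= W}.
  by move=> x /mem_qspan; rewrite span_l0 => /setIP[].
have [l [lW span_l card_l]] := qsubspace_extend Wsub l0W.
have S_gt0 : (0 < #|W :&: Kspan v|)%N by apply/card_gt0P; exists 0; case: S_sub.
have size_l : size l = 2%N.
  by apply/esym/(expnI q_gt1)/eqP; rewrite -(eqn_pmul2r S_gt0) -cardW card_l span_l0.
clear card_l; case: l lW span_l size_l => [|a [|b []]] // lW span_l _.
have [W0 WD WZ] := Wsub.
exists a, b; apply/setP => w; apply/idP/imsetP.
  rewrite -{1}span_l => /qspan_consP[al [w1 [Fal /qspan_consP[be [sg [Fbe sgS ->]] ->]]]].
  move: sgS; rewrite span_l0 setI_Kspan => /imsetP[z zW ->].
  exists (row3 al be z); first by apply/Fq2XP; exists al, be, z.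
  by rewrite mul_row3_col_mx3 addrA.
case=> _ /Fq2XP[al [be [z [Fal Fbe zW ->]]]] ->; rewrite inE in zW.
rewrite mul_row3_col_mx3; apply: (WD) => //; apply: (WD); apply: (WZ) => //.
  by apply: lW; rewrite !inE eqxx.
by apply: lW; rewrite !inE eqxx orbT.
Qed.

Definition Tr_frame (t lam : K) : 'M[K]_3 := col_mx3 (row3 0 0 1) (row3 t 1 0) (row3 lam 0 0).

Lemma row3_Tr_frame t lam a b z : row3 a b z *m Tr_frame t lam = row3 (b * t + z * lam) b a.
Proof.
rewrite mul_row3_col_mx3; apply/rowP => j; rewrite !mxE.
by case: j => [[|[|[|]]] //= _]; ring.
Qed.

Lemma Tr_frame_unit t lam : lam != 0 -> Tr_frame t lam \in unitmx.
Proof.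
move=> lam_neq0; suff /mulmx1_unit[] : Tr_frame t lam *m
    col_mx3 (row3 0 0 lam^-1) (row3 0 1 (- t / lam)) (row3 1 0 0) = 1%:M by [].
apply/matrixP => i j; rewrite !mxE !big_ord_recl big_ord0 !mxE.
by case: i j => [[|[|[|i]]] hi] [[|[|[|j]]] hj] //=; rewrite !mxE /=; field.
Qed.

Lemma U_Tr_Fq2X (Z : {set K}) t lam : Tr t = 1 ->
  [set lam * z | z in Z] = [set x | Tr x == 0] ->
  @U_Tr K q s = [set u *m Tr_frame t lam | u in Fq2X Z].
Proof.
move=> Tr_t lamZ; apply/setP => u; rewrite inE; apply/idP/imsetP.
  case/existsP=> x /existsP[y /andP[Fy /eqP->]].
  have : x - Tr x * t \in [set lam * z | z in Z].
    by rewrite lamZ inE TrB TrZ ?Tr_Fq // Tr_t mulr1 subrr.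
  case/imsetP=> z zZ xE; exists (row3 y (Tr x) z).
    by apply/Fq2XP; exists y, (Tr x), z; rewrite Tr_Fq.
  by rewrite row3_Tr_frame [z * _]mulrC -xE addrC subrK.
case=> _ /Fq2XP[a [b [z [Fa Fb zZ ->]]]] ->; rewrite row3_Tr_frame.
apply/existsP; exists (b * t + z * lam); apply/existsP; exists a; rewrite Fa /=.
have : lam * z \in [set x | Tr x == 0] by rewrite -lamZ imset_f.
by rewrite inE mulrC => /eqP Tr_zlam; rewrite TrD (TrZ _ Fb) Tr_t mulr1 Tr_zlam addr0.
Qed.
End LinearSets.

Unset Implicit Arguments.
Set Strict Implicit.

Theorem proposition2p5 (K : finFieldType) (q s : nat)
  (hq : prime_power q) (hs : (2 <= s)%N) (hK : #|K| = (q ^ s)%N)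
  (W : {set 'rV[K]_3})
  (hW : Fq_subspace q W) (hdim : Fq_dim q W = s.+1)
  (hblock : blocking_set (inL W)) (hnotline : ~ is_line_set (inL W))
  (hpt : exists v : 'rV[K]_3, [/\ v != 0, inL W v & weight q W v = s.-1]) :
  proj_equiv (inL W) (inL (@U_Tr K q s)).
Proof.
have s_gt0 : (0 < s)%N by apply: leq_trans hs.
have [v [v_neq0 _ weight_v]] := hpt.
have card_meet : #|W :&: Kspan v| = (q ^ s.-1)%N.
  rewrite (card_qsubspace hq hK s_gt0 (qsubspace_setI_Kspan v hW)).
  by rewrite -[trunc_log _ _]/(weight q W v) weight_v.
have card_W : #|W| = (q ^ 2 * #|W :&: Kspan v|)%N.
  rewrite (card_qsubspace hq hK s_gt0 hW) [trunc_log _ _]hdim card_meet -expnD.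
  by congr (_ ^ _)%N; lia.
have [a [b W_coord]] := qsubspace_decomp hq hK s_gt0 hW card_W.
have B_unit : col_mx3 a b v \in unitmx.
  apply: contraT => /nonunitmx_ker[c c_neq0 Bc]; case: hnotline.
  apply: (blocking_set_ker_line c_neq0) hblock => w; rewrite W_coord => /imsetP[u _ ->].
  by rewrite -mulmxA Bc mulmx0.
have [lam lam_neq0 lamZ] := qsubspace_scale_kerTr hq hK s_gt0
  (qsubspace_line_coefs v hW) (etrans (esym (card_setI_Kspan W v_neq0)) card_meet).
have [t Tr_t] := exists_Tr_eq1 hq hK s_gt0.
rewrite W_coord (U_Tr_Fq2X hq hK Tr_t lamZ).
exact: proj_equiv_imset B_unit (Tr_frame_unit t lam_neq0).
Qed.
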